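(* Let $0<q<1$. The kernel $K(\mu,n)=(q^{\mu};q)_n$ is strictly totally positive of order $3$ on $(0,\infty)\times\mathbb{N}_0$, i.e. for $m=1,2,3$, all reals $0<\mu_1<\dots<\mu_m$ and all integers $0\le n_1<\dots<n_m$, $\det\big((q^{\mu_i};q)_{n_j}\big)_{i,j=1}^m>0$.
   Context: $(a;q)_n=\prod_{j=0}^{n-1}(1-aq^j)$, with $(a;q)_0=1$. *)

From mathcomp Require Import all_boot all_order all_algebra.
From mathcomp Require Import all_classical all_reals all_analysis.
Set Implicit Arguments. Unset Strict Implicit. Unset Printing Implicit Defensive.
Import Order.TTheory GRing.Theory Num.Theory.
Local Open Scope ring_scope.

Definition qpoch (R : comRingType) (a q : R) (n : nat) : R :=
  \prod_(j < n) (1 - a * q ^+ j).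

Definition qkernel (R : realType) (q mu : R) (n : nat) : R :=
  qpoch (powR q mu) q n.

From mathcomp Require Import all_boot all_order all_algebra.
From mathcomp Require Import all_classical all_reals all_analysis.
From mathcomp Require Import ring lra.
Import Order.TTheory GRing.Theory Num.Theory.
Local Open Scope ring_scope.

Set Implicit Arguments.
Unset Strict Implicit.
Unset Printing Implicit Defensive.

(* Each factor of (q^mu; q)_n is 1 - q^mu q^j = q^j (y + r_j) with
   y = 1 - q^mu, increasing in mu, and r_j = q^-j - 1 >= 0.  Up to positive
   column factors the kernel is thus N_n(y) = prod_(j < n) (y + r_j), and
   dividing row i by N_(n_1)(y_i) leaves a first column of ones.  For m = 2
   what remains is an increment of an increasing function; for m = 3 it is
   det [1, f, f Q] with f = prod_(n_1 <= j < n_2) (y + r_j) and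
   Q = prod_(n_2 <= j < n_3) (y + r_j).  This determinant is nonnegative by
   induction on the factors of f, since multiplying f by y + c, c >= 0, only
   adds terms that are nonnegative because f and Q increase and Q, a product
   of nonnegative increasing linear factors, is convex; the first factor of f
   contributes a strictly positive term. *)

Lemma det_mx22 (R : comNzRingType) (A : 'M[R]_2) :
  \det A = A 0 0 * A 1 1 - A 0 1 * A 1 0.
Proof.
rewrite (expand_det_row _ 0) !big_ord_recl big_ord0 /cofactor !det_mx11 !mxE /=.
do ![rewrite (_ : lift _ _ = 0 :> 'I_2); last exact/val_inj
    |rewrite (_ : lift _ _ = 1 :> 'I_2); last exact/val_inj].
by rewrite /bump /=; ring.
Qed.

Lemma det_mx33 (R : comNzRingType) (A : 'M[R]_3) : \det A =
  A 0 0 * (A 1 1 * A 2 2 - A 1 2 * A 2 1) - A 0 1 * (A 1 0 * A 2 2 - A 1 2 * A 2 0)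
  + A 0 2 * (A 1 0 * A 2 1 - A 1 1 * A 2 0).
Proof.
rewrite (expand_det_row _ 0) !big_ord_recl big_ord0 /cofactor !det_mx22 !mxE /=.
do ![rewrite (_ : lift _ _ = 0 :> 'I_3); last exact/val_inj
    |rewrite (_ : lift _ _ = 1 :> 'I_3); last exact/val_inj
    |rewrite (_ : lift _ _ = 2 :> 'I_3); last exact/val_inj].
by rewrite /bump /=; ring.
Qed.

Definition newton_prod (R : comPzRingType) (r : nat -> R) (s : seq nat) (y : R) : R :=
  \prod_(j <- s) (y + r j).

Section NewtonProducts.

Variable R : realFieldType.
Variable r : nat -> R.
Hypothesis r_ge0 : forall j, 0 <= r j.

Local Notation newton_prod := (newton_prod r).

Lemma newton_prod_cons j s y : newton_prod (j :: s) y = (y + r j) * newton_prod s y.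
Proof. exact: big_cons. Qed.

Lemma newton_prod_cat s t y :
  newton_prod (s ++ t) y = newton_prod s y * newton_prod t y.
Proof. exact: big_cat. Qed.

Lemma newton_prod_cat_nat a b c y : (a <= b)%N -> (b <= c)%N ->
  newton_prod (index_iota a c) y
  = newton_prod (index_iota a b) y * newton_prod (index_iota b c) y.
Proof. exact: big_cat_nat. Qed.

Lemma newton_prod_gt0 s y : 0 < y -> 0 < newton_prod s y.
Proof. by move=> y_gt0; apply: prodr_gt0 => j _; rewrite ltr_wpDr. Qed.

Lemma newton_prod_le s x y : 0 < x -> x <= y -> newton_prod s x <= newton_prod s y.
Proof.
move=> x_gt0 le_xy; apply: ler_prod => j _.
by rewrite lerD2r le_xy addr_ge0 // ltW.
Qed.

Lemma newton_prod_lt s x y : s != [::] -> 0 < x -> x < y ->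
  newton_prod s x < newton_prod s y.
Proof.
move=> s_neq0 x_gt0 lt_xy; apply: ltr_prod => [|j _].
  by rewrite has_predT lt0n size_eq0.
by rewrite ltrD2r lt_xy addr_ge0 // ltW.
Qed.

Section ThreeNodes.

Variables y1 y2 y3 : R.
Hypotheses (y1_gt0 : 0 < y1) (lt_y12 : y1 < y2) (lt_y23 : y2 < y3).

Let lt_y13 : y1 < y3 := lt_trans lt_y12 lt_y23.
Let y2_gt0 : 0 < y2 := lt_trans y1_gt0 lt_y12.
Let y3_gt0 : 0 < y3 := lt_trans y1_gt0 lt_y13.
Let y21_ge0 : 0 <= y2 - y1. Proof. by rewrite subr_ge0 ltW. Qed.
Let y31_ge0 : 0 <= y3 - y1. Proof. by rewrite subr_ge0 ltW. Qed.
Let y32_ge0 : 0 <= y3 - y2. Proof. by rewrite subr_ge0 ltW. Qed.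

(* The determinant of the rows [1, f y_k, g y_k]; [0 <= det3_ones id f] is the
   three-point convexity of f. *)
Definition det3_ones (f g : R -> R) : R :=
  (f y2 - f y1) * (g y3 - g y1) - (f y3 - f y1) * (g y2 - g y1).

Lemma det3_ones_linear_mul (c : R) f :
  0 <= c -> f y1 <= f y2 -> 0 <= det3_ones id f ->
  0 <= det3_ones id (fun y => (y + c) * f y).
Proof.
rewrite /det3_ones /= => c_ge0 le_f12 f_convex.
have -> : (y2 - y1) * ((y3 + c) * f y3 - (y1 + c) * f y1)
          - (y3 - y1) * ((y2 + c) * f y2 - (y1 + c) * f y1)
        = (y3 + c) * ((y2 - y1) * (f y3 - f y1) - (y3 - y1) * (f y2 - f y1))
          + (y3 - y1) * (y3 - y2) * (f y2 - f y1) by ring.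
apply: addr_ge0; first by rewrite mulr_ge0 // addr_ge0 // ltW.
by rewrite !mulr_ge0 // subr_ge0.
Qed.

Lemma newton_prod_convex s : 0 <= det3_ones id (newton_prod s).
Proof.
elim: s => [|j s IHs]; first by rewrite /det3_ones /newton_prod !big_nil; lra.
rewrite /det3_ones !newton_prod_cons.
apply: det3_ones_linear_mul => //.
by rewrite newton_prod_le // ltW.
Qed.

Lemma det3_ones_linear_mul_lb (c : R) f Q :
  0 <= c -> 0 < f y1 -> f y1 <= f y2 -> f y2 <= f y3 ->
  Q y1 <= Q y2 -> Q y2 <= Q y3 -> 0 <= det3_ones id Q ->
  0 <= det3_ones f (fun y => f y * Q y) ->
  (y3 - y1) * (y3 - y2) * (f y1 * f y2 * (Q y2 - Q y1))
    <= det3_ones (fun y => (y + c) * f y) (fun y => (y + c) * (f y * Q y)).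
Proof.
rewrite /det3_ones /= => c_ge0 f1_gt0 le_f12 le_f23 le_Q12 le_Q23 Q_convex D_ge0.
have -> : (((y2 + c) * f y2 - (y1 + c) * f y1) * ((y3 + c) * (f y3 * Q y3)
           - (y1 + c) * (f y1 * Q y1)) - ((y3 + c) * f y3 - (y1 + c) * f y1)
           * ((y2 + c) * (f y2 * Q y2) - (y1 + c) * (f y1 * Q y1)))
  = (y2 + c) * (y3 + c) * ((f y2 - f y1) * (f y3 * Q y3 - f y1 * Q y1)
                           - (f y3 - f y1) * (f y2 * Q y2 - f y1 * Q y1))
    + (y3 - y1) * (y3 - y2) * (f y1 * f y2 * (Q y2 - Q y1))
    + (y3 + c) * f y1 * ((y2 - y1) * (f y3 - f y2) * (Q y3 - Q y1)
         + f y2 * ((y2 - y1) * (Q y3 - Q y1) - (y3 - y1) * (Q y2 - Q y1))) by ring.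
rewrite addrAC lerDr; apply: addr_ge0.
  by rewrite mulr_ge0 // mulr_ge0 // addr_ge0 // ltW.
have le_Q13 := le_trans le_Q12 le_Q23.
apply: mulr_ge0; first by rewrite mulr_ge0 ?addr_ge0 // ltW.
apply: addr_ge0; first by rewrite !mulr_ge0 //; rewrite subr_ge0.
by rewrite mulr_ge0 // ltW // (lt_le_trans f1_gt0).
Qed.

Lemma det3_ones_newton_ge0 s Q :
  Q y1 <= Q y2 -> Q y2 <= Q y3 -> 0 <= det3_ones id Q ->
  0 <= det3_ones (newton_prod s) (fun y => newton_prod s y * Q y).
Proof.
move=> le_Q12 le_Q23 Q_convex.
elim: s => [|j s IHs]; first by rewrite /det3_ones /newton_prod !big_nil; lra.
have := det3_ones_linear_mul_lb (r_ge0 j) (newton_prod_gt0 s y1_gt0)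
  (newton_prod_le s y1_gt0 (ltW lt_y12)) (newton_prod_le s y2_gt0 (ltW lt_y23))
  le_Q12 le_Q23 Q_convex IHs.
rewrite /det3_ones !newton_prod_cons -!mulrA; apply: le_trans.
by rewrite !mulr_ge0 // ?subr_ge0 // ltW // newton_prod_gt0.
Qed.

Lemma det3_ones_newton_gt0 s t : s != [::] -> t != [::] ->
  0 < det3_ones (newton_prod s) (newton_prod (s ++ t)).
Proof.
case: s => [//|j s] _ t_neq0.
have lt_Q12 : newton_prod t y1 < newton_prod t y2 by rewrite newton_prod_lt.
have le_Q23 : newton_prod t y2 <= newton_prod t y3 by rewrite newton_prod_le // ltW.
have := det3_ones_linear_mul_lb (r_ge0 j) (newton_prod_gt0 s y1_gt0)
  (newton_prod_le s y1_gt0 (ltW lt_y12)) (newton_prod_le s y2_gt0 (ltW lt_y23))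
  (ltW lt_Q12) le_Q23 (newton_prod_convex t)
  (det3_ones_newton_ge0 s (ltW lt_Q12) le_Q23 (newton_prod_convex t)).
rewrite /det3_ones cat_cons !newton_prod_cons !newton_prod_cat -!mulrA.
apply: lt_le_trans.
by rewrite !mulr_gt0 ?subr_gt0 ?newton_prod_gt0.
Qed.

End ThreeNodes.

Lemma newton_mx_row_factor m (y : 'I_m -> R) (n : 'I_m -> nat) a :
  (forall j, a <= n j)%N ->
  \matrix_(i, j) newton_prod (index_iota 0 (n j)) (y i)
  = diag_mx (\row_i newton_prod (index_iota 0 a) (y i))
    *m \matrix_(i, j) newton_prod (index_iota a (n j)) (y i).
Proof.
move=> le_a_n; rewrite mul_diag_mx; apply/matrixP => i j.
by rewrite !mxE -newton_prod_cat_nat.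
Qed.

Lemma det_newton_mx_gt0 m (y : 'I_m -> R) (n : 'I_m -> nat) :
  (m <= 3)%N -> (forall i, 0 < y i) -> (forall i j : 'I_m, (i < j)%N -> y i < y j) ->
  (forall i j : 'I_m, (i < j)%N -> (n i < n j)%N) ->
  0 < \det (\matrix_(i, j) newton_prod (index_iota 0 (n j)) (y i)).
Proof.
case: m y n => [|m] y n m_le3 y_gt0 lt_y lt_n; first by rewrite det_mx00.
have le_n0 j : (n ord0 <= n j)%N.
  case: (posnP j) => [j0 | /(lt_n ord0)/ltnW //].
  by rewrite (_ : j = ord0) //; apply: val_inj.
rewrite (newton_mx_row_factor _ le_n0) det_mulmx det_diag mulr_gt0 //.
  by apply: prodr_gt0 => i _; rewrite mxE newton_prod_gt0.
have newton_nil a x : newton_prod (index_iota a a) x = 1.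
  by rewrite /index_iota subnn /newton_prod big_nil.
have iota_neq0 a b : (a < b)%N -> index_iota a b != [::].
  by move=> lt_ab; rewrite -size_eq0 size_iota subn_eq0 -ltnNge.
case: m m_le3 y n {le_n0} y_gt0 lt_y lt_n => [|[|[|//]]] _ y n y_gt0 lt_y lt_n.
- by rewrite det_mx11 mxE newton_nil ltr01.
- rewrite det_mx22 !mxE !newton_nil mul1r mulr1 subr_gt0.
  by rewrite newton_prod_lt ?iota_neq0 ?lt_n ?lt_y.
rewrite det_mx33 !mxE !newton_nil.
have lt_n01 := lt_n 0 1 erefl; have lt_n12 := lt_n 1 2 erefl.
rewrite !(newton_prod_cat_nat _ (ltnW lt_n01) (ltnW lt_n12)).
have := det3_ones_newton_gt0 (y_gt0 0) (lt_y 0 1 erefl) (lt_y 1 2 erefl)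
  (iota_neq0 _ _ lt_n01) (iota_neq0 _ _ lt_n12).
by rewrite /det3_ones !newton_prod_cat; congr (0 < _); ring.
Qed.

End NewtonProducts.

Lemma gtr_powR (R : realType) (a : R) : 0 < a < 1 -> {homo powR a : x y /~ y < x}.
Proof.
case/andP => a_gt0 a_lt1 x y lt_yx.
by rewrite /powR gt_eqF // ltr_expR ltr_nM2r // ln_lt0 // a_gt0.
Qed.

Lemma qpoch_newton (R : fieldType) (x q : R) n : q != 0 ->
  qpoch x q n = (\prod_(j < n) q ^+ j)
                * newton_prod (fun j => (q ^+ j)^-1 - 1) (index_iota 0 n) (1 - x).
Proof.
move=> q_neq0; rewrite /qpoch /newton_prod big_mkord -big_split /=.
apply: eq_bigr => j _.
by rewrite [1 - x + _]addrC addrA subrK mulrBr mulfV ?expf_neq0 // mulrC.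
Qed.

Theorem lemma3 (R : realType) (q : R) (hq0 : 0 < q) (hq1 : q < 1)
  (m : nat) (hm1 : (1 <= m)%N) (hm3 : (m <= 3)%N)
  (mu : 'I_m -> R) (n : 'I_m -> nat)
  (hmu0 : forall i, 0 < mu i)
  (hmu : forall i j : 'I_m, (i < j)%N -> mu i < mu j)
  (hn : forall i j : 'I_m, (i < j)%N -> (n i < n j)%N) :
  0 < \det (\matrix_(i < m, j < m) qkernel q (mu i) (n j)).
Proof.
have q01 : 0 < q < 1 by rewrite hq0.
set r := fun j => (q ^+ j)^-1 - 1.
have r_ge0 j : 0 <= r j.
  by rewrite subr_ge0 invf_ge1 ?exprn_gt0 // exprn_ile1 // ltW.
have -> : \matrix_(i, j) qkernel q (mu i) (n j)
  = (\matrix_(i, j) newton_prod r (index_iota 0 (n j)) (1 - q `^ mu i))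
    *m diag_mx (\row_j \prod_(k < n j) q ^+ k).
  rewrite mul_mx_diag; apply/matrixP => i j.
  by rewrite !mxE /qkernel qpoch_newton ?gt_eqF // mulrC.
rewrite det_mulmx det_diag mulr_gt0 //.
  apply: det_newton_mx_gt0 => // [i | i j /hmu lt_mu].
    by rewrite subr_gt0 -[X in _ < X](powRr0 q) gtr_powR.
  by rewrite ltrD2l ltrN2 gtr_powR.
by apply: prodr_gt0 => j _; rewrite mxE prodr_gt0 // => k _; rewrite exprn_gt0.
Qed.
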